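(* For every integer $k>2$, $N(2k+6,k)=2$ if $k\equiv1\pmod 3$ and $N(2k+6,k)=0$ if $k\not\equiv1\pmod3$.
   Context: For $n>k\ge1$, $N(n,k)$ is the nullity of the $n\times n$ skew-symmetric Toeplitz matrix $A(n,k)$ whose first $k$ superdiagonals have all entries $1$ and whose remaining superdiagonals have all entries $0$. *)

From mathcomp Require Import all_boot all_order all_algebra.
Set Implicit Arguments. Unset Strict Implicit. Unset Printing Implicit Defensive.
Import GRing.Theory Num.Theory.
Local Open Scope ring_scope.

Definition Amx (R : realFieldType) (n k : nat) : 'M[R]_n :=
  \matrix_(i < n, j < n)
    (if ((i < j)%N && (j <= i + k)%N) then 1
     else if ((j < i)%N && (i <= j + k)%N) then -1 else 0).

Definition Nnull (R : realFieldType) (n k : nat) : nat := (n - \rank (Amx R n k))%N.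

From mathcomp Require Import all_boot all_order all_algebra.
From mathcomp Require Import zify ring.
Set Implicit Arguments. Unset Strict Implicit. Unset Printing Implicit Defensive.
Import GRing.Theory Num.Theory.
Local Open Scope ring_scope.

(* A row vector x is in the left kernel of A(n,k) exactly when its window sums
   Y_j = x_(j-k) + ... + x_j are k-periodic on [0, n + k).  As
   x_j - x_(j-k-1) = Y_j - Y_(j-1), periodicity makes x telescope along the
   residue classes mod k+1: x_(i + m(k+1)) = Y_(i+m) - Y_(i-1).  For n = 2k+6
   the vanishing of x on [2k+6, 3k+6) therefore says Y_3 = 0, Y_4 = Y_0,
   Y_5 = Y_1 and Y_(t+3) = Y_t for 3 <= t < k: from index 3 on, Y has period 3.
   Matching this with Y_(k+r) = Y_r forces Y_2 = 0, and Y_0 = Y_1 = 0 unless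
   k = 1 (mod 3).  So x |-> (x_0, x_1) embeds the kernel into R^2, and the
   kernel is trivial unless k = 1 (mod 3); in that case, for all a and b, the
   k-periodic repetition of a, b, 0, 0, a, b, 0, a, b, 0, ..., a, b, 0 is the
   window-sum sequence of a kernel vector. *)

Section SlidingWindow.

Variables (R : comPzRingType) (k : nat).
Implicit Types (x Y : nat -> R) (M : nat).

Definition lag Y (j : nat) : R := if j is j'.+1 then Y j' else 0.

(* [Y j] is the sum of the (at most k+1) terms [x i] with [j - k <= i <= j],
   stated through its first differences. *)
Definition window_sums x Y M :=
  forall j, (j < M)%N ->
    Y j = lag Y j + x j - (if (k < j)%N then x (j - k.+1)%N else 0).

Definition periodic_on Y M := forall b, (b + k < M)%N -> Y (b + k)%N = Y b.

Lemma window_sums_uniq x Y Y' M :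
  window_sums x Y M -> window_sums x Y' M -> forall j, (j < M)%N -> Y j = Y' j.
Proof.
move=> hY hY'; elim=> [|j IHj] hj; first by rewrite hY // hY'.
by rewrite hY // hY' // /= IHj // ltnW.
Qed.

Lemma window_sums_eq0 x Y M : window_sums x Y M ->
  (forall j, (j < M)%N -> Y j = 0) -> forall j, (j < M)%N -> x j = 0.
Proof.
move=> hW hY; elim/ltn_ind=> j IHj hj.
have lag0 : lag Y j = 0 by case: j {IHj} hj => //= j hj; apply: hY; lia.
have prev0 : (if (k < j)%N then x (j - k.+1)%N else 0) = 0.
  by case: ifP => // hkj; apply: IHj; lia.
by move: (hW j hj); rewrite hY // lag0 prev0 add0r subr0 => /esym.
Qed.

Lemma periodic_onMD Y M : periodic_on Y M ->
  forall m b, (b + m * k < M)%N -> Y (b + m * k)%N = Y b.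
Proof.
move=> hP; elim=> [|m IHm] b hb; first by rewrite mul0n addn0.
by rewrite mulSn (addnC k) addnA hP ?IHm //; lia.
Qed.

Lemma window_sums_telescope x Y M : window_sums x Y M -> periodic_on Y M ->
  forall i m, (i <= k)%N -> (i + m * k.+1 < M)%N ->
  x (i + m * k.+1)%N = Y (i + m)%N - lag Y i.
Proof.
move=> hW hP i; elim=> [|m IHm] hik hM.
  rewrite mul0n !addn0 in hM *.
  by rewrite (hW i hM) ifN -?leqNgt //; ring.
set j := (i + m.+1 * k.+1)%N in hM *.
have hkj : (k < j)%N by rewrite /j; lia.
have prevj : (j - k.+1 = i + m * k.+1)%N by rewrite /j; lia.
have lagj : lag Y j = Y (i + m)%N.
  rewrite (_ : j = ((i + m) + m.+1 * k).+1)%N /=; last by rewrite /j; lia.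
  by rewrite (periodic_onMD hP) //; rewrite /j in hM; lia.
have Yj : Y j = Y (i + m.+1)%N.
  rewrite (_ : j = (i + m.+1) + m.+1 * k)%N; last by rewrite /j; lia.
  by rewrite (periodic_onMD hP) //; rewrite /j in hM; lia.
move: (hW j hM); rewrite hkj prevj lagj Yj IHm //; last lia.
move=> ->; ring.
Qed.

(* The telescoping formula of [window_sums_telescope], read as a definition. *)
Definition window_inverse Y (j : nat) : R :=
  Y (j %% k.+1 + j %/ k.+1)%N - lag Y (j %% k.+1).

Lemma window_sums_inverse Y M : (forall t, Y (t + k)%N = Y t) ->
  window_sums (window_inverse Y) Y M.
Proof.
move=> hP j _; have YMD m t : Y (t + m * k)%N = Y t.
  by apply: (@periodic_onMD _ (t + m * k).+1) => // b _; apply: hP.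
rewrite /window_inverse; case: (leqP j k) => hjk.
  by rewrite modn_small ?divn_small // addn0; ring.
set i := ((j - k.+1) %% k.+1)%N; set q := ((j - k.+1) %/ k.+1)%N.
have ej : j = (i + q.+1 * k.+1)%N.
  by have := divn_eq (j - k.+1) k.+1; rewrite -/i -/q; nia.
have -> : (j %% k.+1 = i)%N by rewrite ej addnC modnMDl modn_mod.
have -> : (j %/ k.+1 = q.+1)%N by rewrite ej divnDMl // divn_small ?ltn_mod.
have -> : Y j = Y (i + q.+1)%N by rewrite -(YMD q.+1 (i + q.+1)%N) ej; congr Y; nia.
have -> : lag Y j = Y (i + q)%N.
  by rewrite (_ : j = (i + q + q.+1 * k).+1)%N /= ?YMD //; nia.
ring.
Qed.

Lemma window_sums_congr x x' Y M : (forall j, (j < M)%N -> x j = x' j) ->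
  window_sums x Y M -> window_sums x' Y M.
Proof.
move=> hx hW j hj; rewrite hW // hx //; case: ifP => // hkj.
by rewrite hx //; lia.
Qed.

End SlidingWindow.

Section TailRelations.

Variables (R : comPzRingType) (k : nat).
Hypothesis k_gt2 : (2 < k)%N.
Implicit Types (x Y : nat -> R).

Definition tail_relations Y :=
  (forall r, (r < 3)%N -> Y (r + 3)%N = lag Y r) /\
  (forall t, (3 <= t < k)%N -> Y (t + 3)%N = Y t).

Lemma tail_eq0_iff x Y :
  window_sums k x Y (3 * k + 6) -> periodic_on k Y (3 * k + 6) ->
  (forall j, (2 * k + 6 <= j < 3 * k + 6)%N -> x j = 0) <-> tail_relations Y.
Proof.
move=> hW hP; have tele := window_sums_telescope hW hP.
have x_hi r : (r < 3)%N -> x (r + 3 * k.+1)%N = Y (r + 3)%N - lag Y r.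
  by move=> hr; apply: tele; lia.
have x_lo t : (3 <= t < k)%N -> x (t.+1 + 2 * k.+1)%N = Y (t + 3)%N - Y t.
  by move=> ht; rewrite tele ?addSnnS //; lia.
split=> [hx | [hr ht] j hj].
  split=> [r hr | t ht]; apply/eqP; rewrite -subr_eq0.
    by rewrite -x_hi // hx //; lia.
  by rewrite -x_lo // hx //; lia.
have [jlo | jhi] := ltnP j (3 * k + 3)%N.
  have -> : j = ((j - 2 * k - 3).+1 + 2 * k.+1)%N by lia.
  by rewrite x_lo ?ht ?subrr //; lia.
have -> : j = ((j - 3 * k - 3) + 3 * k.+1)%N by lia.
by rewrite x_hi ?hr ?subrr //; lia.
Qed.

Lemma tail_relations_mod3 Y : tail_relations Y ->
  forall t, (3 <= t <= k + 2)%N -> Y t = nth 0 [:: 0; Y 0%N; Y 1%N] (t %% 3).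
Proof.
case=> hr ht; elim/ltn_ind=> t IHt htk.
have [t_lt6 | t_ge6] := ltnP t 6%N.
  have : t = 3%N \/ t = 4%N \/ t = 5%N by lia.
  by case=> [->|[->|->]]; [rewrite (hr 0%N) | rewrite (hr 1%N) | rewrite (hr 2%N)].
have -> : t = ((t - 3) + 3)%N by lia.
rewrite ht ?modnDr; last lia.
by apply: IHt; lia.
Qed.

Lemma tail_relations_wrap Y : periodic_on k Y (3 * k + 6) -> tail_relations Y ->
  Y 2%N = 0 /\ ((k %% 3 != 1)%N -> Y 0%N = 0 /\ Y 1%N = 0).
Proof.
move=> hP hT; have m3 := tail_relations_mod3 hT.
have e0 : Y 0%N = nth 0 [:: 0; Y 0%N; Y 1%N] (k %% 3).
  rewrite -{1}(hP 0%N); last lia.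
  by rewrite add0n (m3 k) //; lia.
have e1 : Y 1%N = nth 0 [:: 0; Y 0%N; Y 1%N] ((k %% 3 + 1) %% 3).
  rewrite modnDml -{1}(hP 1%N); last lia.
  by rewrite addnC (m3 (k + 1)%N) //; lia.
have e2 : Y 2%N = nth 0 [:: 0; Y 0%N; Y 1%N] ((k %% 3 + 2) %% 3).
  rewrite modnDml -{1}(hP 2%N); last lia.
  by rewrite addnC (m3 (k + 2)%N) //; lia.
have k3_lt3 : (k %% 3 < 3)%N by rewrite ltn_mod.
move: e0 e1 e2 k3_lt3; case: (k %% 3)%N => [|[|[|r]]] //=.
- by move=> e0 e1 e2 _; rewrite e2 e1 e0.
- by move=> e0 e1 e2 _; rewrite e2 e0 e1.
Qed.

Lemma tail_relations_eq0 Y : periodic_on k Y (3 * k + 6) -> tail_relations Y ->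
  (k %% 3 != 1)%N \/ (Y 0%N = 0 /\ Y 1%N = 0) ->
  forall t, (t < 3 * k + 6)%N -> Y t = 0.
Proof.
move=> hP hT hc; have [Y2 wrap] := tail_relations_wrap hP hT.
have [Y0 Y1] : Y 0%N = 0 /\ Y 1%N = 0 by case: hc => [/wrap|].
move=> t ht; rewrite (divn_eq t k) addnC (periodic_onMD hP); last first.
  by rewrite addnC -divn_eq.
have : (t %% k < k)%N by rewrite ltn_mod; lia.
move: (t %% k)%N => s hs.
have [s_lt3 | s_ge3] := ltnP s 3%N.
  have : s = 0%N \/ s = 1%N \/ s = 2%N by lia.
  by case=> [|[|]] ->.
rewrite (tail_relations_mod3 hT) ?Y0 ?Y1; last lia.
by case: (s %% 3)%N => [|[|[|n]]] //=; rewrite nth_nil.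
Qed.

(* For k = 1 (mod 3), [pattern a b (t %% k)] is 3-periodic from t = 3 on,
   across the wrap-arounds at multiples of k. *)
Definition pattern (a b : R) (s : nat) : R :=
  if (s < 3)%N then nth 0 [:: a; b; 0] s else nth 0 [:: 0; a; b] (s %% 3).

Lemma pattern_tail_relations a b : (k %% 3 = 1)%N ->
  tail_relations (fun t => pattern a b (t %% k)).
Proof.
move=> k3; split=> [r hr | t ht] /=.
  have : r = 0%N \/ r = 1%N \/ r = 2%N by lia.
  have [-> | k_ne4] := eqVneq k 4%N; first by case=> [|[|]] ->; reflexivity.
  by case=> [|[|]] ->; rewrite /= ?mod0n !modn_small //; lia.
rewrite (modn_small (m := t)); last lia.
have [t3_lt | t3_ge] := ltnP (t + 3)%N k.
  by rewrite modn_small // /pattern !ifN -?leqNgt ?modnDr //; lia.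
set s := (t + 3 - k)%N.
have hs : (s < 3)%N by rewrite /s; lia.
have ts : (t + 3 = s + k)%N by rewrite /s; lia.
clearbody s; rewrite ts modnDr (modn_small (m := s)); last lia.
rewrite /pattern hs ifN -?leqNgt; last lia.
have -> : (t %% 3 = (s + 1) %% 3)%N by lia.
have : s = 0%N \/ s = 1%N \/ s = 2%N by lia.
by case=> [|[|]] ->.
Qed.

End TailRelations.

Section BandSums.

Variables (R : comPzRingType) (n k : nat).

Definition band_sum (x : nat -> R) (j : nat) : R :=
  \sum_(i < n) (if (i <= j <= i + k)%N then x i else 0).

Lemma window_sums_band_sum x M : (forall t, (n <= t)%N -> x t = 0) ->
  window_sums k x (band_sum x) M.
Proof.
move=> hx; have pick m : x m = \sum_(i < n) (if i == m :> nat then x i else 0).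
  by rewrite -big_mkcond big_ord1_eq; case: ltnP => // /hx.
case=> [|j] _ /=.
  rewrite (pick 0%N) add0r subr0; apply: eq_bigr => i _.
  by case: ifP; case: ifP => //; lia.
rewrite (pick j.+1) subSS ltnS.
have -> : (if (k <= j)%N then x (j - k)%N else 0) =
    \sum_(i < n) (if (k <= j)%N && (i == (j - k)%N :> nat) then x i else 0).
  by case: ifP => _; [exact: pick | rewrite big1].
rewrite /band_sum -big_split -sumrB /=; apply: eq_bigr => i _.
by repeat case: ifP; intros; first [ring | lia].
Qed.

End BandSums.

Section RowSeq.

Variables (R : pzRingType) (n : nat).
Implicit Types w : 'rV[R]_n.

Definition row_seq w (t : nat) : R := oapp (w 0) 0 (insub t).

Lemma row_seq_ord w (i : 'I_n) : row_seq w i = w 0 i.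
Proof. by rewrite /row_seq valK. Qed.

Lemma row_seq_out w t : (n <= t)%N -> row_seq w t = 0.
Proof. by move=> hn; rewrite /row_seq insubF // ltnNge hn. Qed.

Lemma row_seq_row (x : nat -> R) t :
  row_seq (\row_(i < n) x i) t = if (t < n)%N then x t else 0.
Proof.
rewrite /row_seq; case: insubP => [i _ <- | /negbTE ->] //=.
by rewrite mxE ltn_ord.
Qed.

Lemma mulmx_pid_mx w p (j : 'I_p) : (w *m pid_mx p) 0 j = row_seq w j.
Proof.
rewrite mxE (eq_bigr (fun i : 'I_n => if i == j :> nat then row_seq w i else 0)).
  by rewrite -big_mkcond big_ord1_eq; case: ltnP => // /row_seq_out.
move=> i _; rewrite mxE row_seq_ord; case: eqP => [eij | _] /=; last by rewrite mulr0.
by rewrite eij ltn_ord mulr1.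
Qed.

End RowSeq.

Section BandMatrix.

Variables (R : realFieldType) (n k : nat).
Implicit Types w : 'rV[R]_n.

Lemma mulmx_Amx w (j : 'I_n) : (w *m Amx R n k) 0 j =
  band_sum n k (row_seq w) j - band_sum n k (row_seq w) (j + k).
Proof.
rewrite mxE /band_sum -sumrB; apply: eq_bigr => i _; rewrite mxE !row_seq_ord.
by repeat case: ifP; intros; first [ring | lia].
Qed.

Lemma mulmx_Amx_eq0 w :
  w *m Amx R n k = 0 <-> periodic_on k (band_sum n k (row_seq w)) (n + k).
Proof.
split=> [hw b hb | hP].
  have hbn : (b < n)%N by lia.
  by apply/eqP; rewrite eq_sym -subr_eq0 -(mulmx_Amx w (Ordinal hbn)) hw mxE.
by apply/rowP => j; rewrite mulmx_Amx hP ?subrr ?mxE // ltn_add2r.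
Qed.

End BandMatrix.

Lemma mxrank_bijective_mul (F : fieldType) m n p (K : 'M[F]_(m, n)) (f : 'M_(n, p)) :
  (forall w : 'rV_n, (w <= K)%MS -> w *m f = 0 -> w = 0) ->
  (forall v : 'rV_p, exists2 w : 'rV_n, (w <= K)%MS & w *m f = v) ->
  \rank K = p.
Proof.
move=> f_inj f_surj.
have capK0 : (K :&: kermx f)%MS = 0.
  apply/eqP; rewrite -submx0; apply/rV_subP => w.
  rewrite sub_capmx sub_kermx => /andP[wK /eqP wf].
  by rewrite (f_inj w wK wf) sub0mx.
rewrite -(mxrank_mul_ker K f) capK0 mxrank0 addn0; apply/eqP.
rewrite -/(row_full _) -sub1mx; apply/rV_subP => v _; have [w wK <-] := f_surj v.
exact: submxMr.
Qed.

Section KernelA.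

Variables (R : realFieldType) (k : nat).
Hypothesis k_gt2 : (2 < k)%N.
Local Notation A := (Amx R (2 * k + 6) k).

Lemma periodic_on_kerA w : w *m A = 0 ->
  periodic_on k (band_sum (2 * k + 6) k (row_seq w)) (3 * k + 6).
Proof. by move/mulmx_Amx_eq0; rewrite (_ : 2 * k + 6 + k = 3 * k + 6)%N //; lia. Qed.

Lemma kerA_eq0 w : w *m A = 0 ->
  (k %% 3 != 1)%N \/ (row_seq w 0%N = 0 /\ row_seq w 1%N = 0) -> w = 0.
Proof.
move=> /periodic_on_kerA hP hc; set Y := band_sum _ _ _ in hP.
have hx := @row_seq_out _ _ w.
have hW : window_sums k (row_seq w) Y (3 * k + 6) by exact: window_sums_band_sum.
have hT : tail_relations k Y.
  by apply/(tail_eq0_iff k_gt2 hW hP) => j hj; apply: hx; lia.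
have Y0 : Y 0%N = row_seq w 0%N by rewrite hW /= ?add0r ?subr0 //; lia.
have Y1 : Y 1%N = row_seq w 0%N + row_seq w 1%N.
  by rewrite hW /= ?Y0 ?ifN -?leqNgt ?subr0 //; lia.
have hcY : (k %% 3 != 1)%N \/ (Y 0%N = 0 /\ Y 1%N = 0).
  by case: hc => [|[x0 x1]]; [left | right; rewrite Y1 Y0 x0 x1 addr0].
have x0 := window_sums_eq0 hW (tail_relations_eq0 k_gt2 hP hT hcY).
by apply/rowP => i; rewrite mxE -row_seq_ord x0 //; have := ltn_ord i; lia.
Qed.

Lemma kerA_onto (v : 'rV[R]_2) : (k %% 3 = 1)%N ->
  exists2 w, w *m A = 0 & w *m pid_mx 2 = v.
Proof.
move=> k3; set a := v 0 0; set b := v 0 0 + v 0 1.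
pose Y t := pattern a b (t %% k).
have Yper t : Y (t + k)%N = Y t by rewrite /Y modnDr.
pose x := window_inverse k Y.
have hW M : window_sums k x Y M by exact: window_sums_inverse.
have hP : periodic_on k Y (3 * k + 6) by move=> t _; apply: Yper.
have xtail := (tail_eq0_iff k_gt2 (hW _) hP).2 (pattern_tail_relations k_gt2 a b k3).
pose w := \row_(i < 2 * k + 6) x i.
have hWw : window_sums k (row_seq w) Y (3 * k + 6).
  apply: window_sums_congr (hW _) => j hj; rewrite row_seq_row.
  by case: ifP => // hjn; rewrite xtail //; lia.
have YwY := window_sums_uniq (window_sums_band_sum _ (row_seq_out w)) hWw.
exists w.
  by apply/mulmx_Amx_eq0 => t ht; rewrite !YwY ?Yper //; lia.
have x0 : x 0%N = a.
  by rewrite /x /window_inverse mod0n div0n /= /Y mod0n subr0; reflexivity.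
have x1 : x 1%N = v 0 1.
  have k1 : (1 < k)%N by lia.
  have k1S : (1 < k.+1)%N by lia.
  rewrite /x /window_inverse (modn_small k1S) (divn_small k1S) /=.
  rewrite /Y mod0n (modn_small k1).
  by rewrite /pattern /= /b addrAC subrr add0r.
apply/rowP => j; rewrite mulmx_pid_mx row_seq_row ifT; last by have := ltn_ord j; lia.
by case: j => [[|[|j]] hj] //=; rewrite ?x0 ?x1 /a; congr (v _ _); apply: val_inj.
Qed.

End KernelA.

Theorem theorem8p6 (R : realFieldType) (k : nat) (hk : (2 < k)%N) :
  Nnull R (2 * k + 6) k = (if k %% 3 == 1 then 2 else 0)%N.
Proof.
rewrite /Nnull -mxrank_ker; case: ifP => [/eqP k3 | /negbT k3].
  apply: mxrank_bijective_mul (pid_mx 2) _ _ => [w | v].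
    rewrite sub_kermx => /eqP wA wE; apply: (kerA_eq0 hk wA); right.
    by split; rewrite -(mulmx_pid_mx w (p := 2) (Ordinal _)) wE mxE.
  by have [w wA <-] := kerA_onto hk v k3; exists w; rewrite ?sub_kermx ?wA.
apply/eqP; rewrite mxrank_eq0 -submx0; apply/rV_subP => w.
by rewrite sub_kermx => /eqP wA; rewrite (kerA_eq0 hk wA) ?sub0mx //; left.
Qed.
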